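(* Let $\vec r:\mathbb{Z}\to\mathbb{R}^3$ be a discrete centroaffine space curve with invariants $\kappa_n,\bar\kappa_n,\tau_n$, let $(\beta_n)$ be nonzero reals and $\vec r'_n=\beta_n\vec r_n$ with torsions $\tau'_n$. If $\tau_n=0$ and $\tau'_n=0$ for all $n$, then for all $n$ $$\frac{1}{\beta_{n+2}}=\kappa_n\frac{1}{\beta_{n-1}}-(\kappa_n+\bar\kappa_n)\frac{1}{\beta_n}+(1+\bar\kappa_n)\frac{1}{\beta_{n+1}},$$ equivalently $\frac{1}{\beta_{n+2}}-\frac{1}{\beta_{n+1}}=\bar\kappa_n\Big(\frac{1}{\beta_{n+1}}-\frac{1}{\beta_n}\Big)-\kappa_n\Big(\frac{1}{\beta_n}-\frac{1}{\beta_{n-1}}\Big)$.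
   Context: A discrete centroaffine space curve is a map $\vec r:\mathbb{Z}\to\mathbb{R}^3$ with $[\vec r_{k-1},\vec r_k,\vec r_{k+1}]\ne0$ for all $k$, where $\vec r_k=\vec r(k)$, $[\cdot,\cdot,\cdot]$ is the $3\times3$ determinant and $\vec t_k=\vec r_{k+1}-\vec r_k$. With $D_k=[\vec r_{k-1},\vec r_k,\vec r_{k+1}]$: $\kappa_k=\frac{[\vec r_k,\vec r_{k+1},\vec r_{k+2}]}{D_k}$, $\bar\kappa_k=\frac{[\vec r_{k+1},\vec t_{k-1},\vec t_{k+1}]}{D_k}$, $\tau_k=\frac{[\vec t_{k-1},\vec t_k,\vec t_{k+1}]}{D_k}$ (first/second centroaffine curvature and centroaffine torsion). *)

(* the statement is purely algebraic, stated over an arbitrary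
   real field R (R^3 is 'rV[R]_3, curves are indexed by int). *)
From HB Require Import structures.
From mathcomp Require Import all_boot all_order all_algebra.
Set Implicit Arguments. Unset Strict Implicit. Unset Printing Implicit Defensive.
Import Order.TTheory GRing.Theory Num.Theory.
Local Open Scope ring_scope.

Definition det3 (R : realFieldType) (a b c : 'rV[R]_3) : R :=
  \det (col_mx a (col_mx b c) : 'M[R]_3).

Definition centroaffine_curve (R : realFieldType) (r : int -> 'rV[R]_3) : Prop :=
  forall k : int, det3 (r (k - 1)) (r k) (r (k + 1)) != 0.

Definition tangent (R : realFieldType) (r : int -> 'rV[R]_3) (k : int) : 'rV[R]_3 :=
  r (k + 1) - r k.

Definition Dk (R : realFieldType) (r : int -> 'rV[R]_3) (k : int) : R :=
  det3 (r (k - 1)) (r k) (r (k + 1)).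

Definition kappa (R : realFieldType) (r : int -> 'rV[R]_3) (k : int) : R :=
  det3 (r k) (r (k + 1)) (r (k + 2)) / Dk r k.

Definition kappabar (R : realFieldType) (r : int -> 'rV[R]_3) (k : int) : R :=
  det3 (r (k + 1)) (tangent r (k - 1)) (tangent r (k + 1)) / Dk r k.

Definition torsion (R : realFieldType) (r : int -> 'rV[R]_3) (k : int) : R :=
  det3 (tangent r (k - 1)) (tangent r k) (tangent r (k + 1)) / Dk r k.

(** By multilinearity, the torsion numerator [t_{n-1}, t_n, t_{n+1}] of four
    consecutive points x0..x3 is the alternating sum m0 - m1 + m2 - m3 of
    their 3-minors (m_i omits x_i), so tau = 0 reads m0 - m1 + m2 = m3.
    Rescaling the points by b0..b3 multiplies each minor by the three
    corresponding b's; after division by b0 b1 b2 b3, tau' = 0 reads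
    m0/b0 - m1/b1 + m2/b2 = m3/b3.  Eliminating m2 and dividing by m3 = D_n
    gives the recurrence, as kappa = m0/m3 and kappabar = (m1 - m0)/m3. *)

From mathcomp Require Import all_boot all_order all_algebra ring.
Set Implicit Arguments.
Unset Strict Implicit.
Unset Printing Implicit Defensive.

Import GRing.Theory.
Local Open Scope ring_scope.

Lemma det_mx33 (R : comPzRingType) (f : nat -> nat -> R) :
  \det (\matrix_(i < 3, j < 3) f i j) =
    f 0 0 * (f 1 1 * f 2 2 - f 1 2 * f 2 1)
  - f 0 1 * (f 1 0 * f 2 2 - f 1 2 * f 2 0)
  + f 0 2 * (f 1 0 * f 2 1 - f 1 1 * f 2 0).
Proof.
rewrite (expand_det_row _ 0) !big_ord_recl big_ord0 /cofactor.
rewrite !(expand_det_row _ 0) !big_ord_recl !big_ord0 /cofactor !det_mx11 !mxE.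
rewrite /= /bump /=; ring.
Qed.

Section Det3.
Variable R : realFieldType.
Implicit Types (x y z w : 'rV[R]_3) (a b c : R).

Lemma det3E x y z :
  let e v (k : nat) := v 0 (inord k : 'I_3) in
  det3 x y z =
    e x 0 * (e y 1 * e z 2 - e y 2 * e z 1)
  - e x 1 * (e y 0 * e z 2 - e y 2 * e z 0)
  + e x 2 * (e y 0 * e z 1 - e y 1 * e z 0).
Proof.
pose row i := if i == 0%N then x else if i == 1%N then y else z.
rewrite /det3 (_ : col_mx x (col_mx y z) = \matrix_(i < 3, j < 3) row i 0 (inord j)).
  by rewrite (@det_mx33 _ (fun i j => row i 0 (inord j))).
apply/matrixP => i j; rewrite !mxE inord_val.
case: splitP => k ->; first by rewrite (ord1 k).
by rewrite mxE; case: splitP => l ->; rewrite (ord1 l).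
Qed.

Lemma det3Z a b c x y z :
  det3 (a *: x) (b *: y) (c *: z) = a * b * c * det3 x y z.
Proof. by rewrite !det3E /= !mxE; ring. Qed.

Lemma det3_diffs x y z w :
  det3 (y - x) (z - y) (w - z) =
  det3 y z w - det3 x z w + det3 x y w - det3 x y z.
Proof. by rewrite !det3E /= !mxE; ring. Qed.

Lemma det3_mid_diffs x y z w :
  det3 z (y - x) (w - z) = det3 x z w - det3 y z w.
Proof. by rewrite !det3E /= !mxE; ring. Qed.

End Det3.

Section CurveInvariants.
Variables (R : realFieldType) (s : int -> 'rV[R]_3) (n : int).

Let subn1K : n - 1 + 1 = n. Proof. exact: subrK. Qed.
Let addn1S : n + 1 + 1 = n + 2. Proof. by rewrite -addrA. Qed.

Lemma torsion_eq0_minors : Dk s n != 0 -> torsion s n = 0 ->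
  det3 (s n) (s (n + 1)) (s (n + 2)) - det3 (s (n - 1)) (s (n + 1)) (s (n + 2))
  + det3 (s (n - 1)) (s n) (s (n + 2)) = Dk s n.
Proof.
move=> D_neq0 /eqP; rewrite /torsion /tangent subn1K addn1S det3_diffs.
by rewrite mulf_eq0 invr_eq0 (negPf D_neq0) orbF subr_eq0 => /eqP.
Qed.

Lemma kappabarE : kappabar s n =
  (det3 (s (n - 1)) (s (n + 1)) (s (n + 2)) - det3 (s n) (s (n + 1)) (s (n + 2)))
  / Dk s n.
Proof. by rewrite /kappabar /tangent subn1K addn1S det3_mid_diffs. Qed.

End CurveInvariants.

Lemma inv_recurrence (F : fieldType) (m0 m1 m2 m3 b0 b1 b2 b3 : F) :
  m3 != 0 -> b0 != 0 -> b1 != 0 -> b2 != 0 -> b3 != 0 ->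
  m0 - m1 + m2 = m3 ->
  b1 * b2 * b3 * m0 - b0 * b2 * b3 * m1 + b0 * b1 * b3 * m2 = b0 * b1 * b2 * m3 ->
  b3^-1 = m0 / m3 * b0^-1 - (m0 / m3 + (m1 - m0) / m3) * b1^-1
          + (1 + (m1 - m0) / m3) * b2^-1.
Proof.
move=> m3_neq0 b0_neq0 b1_neq0 b2_neq0 b3_neq0 rel rel_scaled.
have m2E : m2 = m3 - m0 + m1 by rewrite -rel; ring.
have b3E : b3^-1 = (m0 / b0 - m1 / b1 + m2 / b2) / m3.
  apply/eqP; rewrite -subr_eq0.
  have -> : b3^-1 - (m0 / b0 - m1 / b1 + m2 / b2) / m3 =
      (b0 * b1 * b2 * m3 - (b1 * b2 * b3 * m0 - b0 * b2 * b3 * m1 + b0 * b1 * b3 * m2))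
      / (b0 * b1 * b2 * b3 * m3).
    by field; rewrite m3_neq0 b0_neq0 b1_neq0 b2_neq0 b3_neq0.
  by rewrite rel_scaled subrr mul0r.
by rewrite b3E m2E; field; rewrite m3_neq0 b0_neq0 b1_neq0 b2_neq0.
Qed.

Theorem proposition6p3 (R : realFieldType) (r : int -> 'rV[R]_3) (beta : int -> R)
  (hr : centroaffine_curve r)
  (hbeta : forall n : int, beta n != 0)
  (htau : forall n : int, torsion r n = 0)
  (htau' : forall n : int, torsion (fun k => beta k *: r k) n = 0) :
  forall n : int,
    (beta (n + 2))^-1 =
      kappa r n * (beta (n - 1))^-1 - (kappa r n + kappabar r n) * (beta n)^-1
      + (1 + kappabar r n) * (beta (n + 1))^-1
    /\
    (beta (n + 2))^-1 - (beta (n + 1))^-1 =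
      kappabar r n * ((beta (n + 1))^-1 - (beta n)^-1)
      - kappa r n * ((beta n)^-1 - (beta (n - 1))^-1).
Proof.
move=> n.
have D_neq0 : Dk r n != 0 by exact: hr.
have Dbeta_neq0 : Dk (fun k => beta k *: r k) n != 0.
  by rewrite /Dk det3Z !mulf_neq0.
have rel := torsion_eq0_minors D_neq0 (htau n).
have := torsion_eq0_minors Dbeta_neq0 (htau' n); rewrite /Dk !det3Z => rel_scaled.
have inv_beta2 := inv_recurrence D_neq0 (hbeta _) (hbeta _) (hbeta _) (hbeta _) rel rel_scaled.
rewrite kappabarE; split; first exact: inv_beta2.
by rewrite inv_beta2 /kappa; ring.
Qed.
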